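(* (i) For every number $N\ge 2$ of qubits, there is no unextendible product basis of $(\mathbb{C}^2)^{\otimes N}$ that is unextendible across every bipartition. (ii) For $N\ge 3$ qubits, there exists an unextendible entangled basis of $(\mathbb{C}^2)^{\otimes N}$, consisting of genuinely multipartite entangled states, whose unextendibility is conserved across every bipartition.
   Context: Consider $N$ qubits held by $N$ parties. A bipartition is a split of the parties into two nonempty groups, viewing the space as a bipartite space $\mathbb{C}^{2^{k}}\otimes\mathbb{C}^{2^{N-k}}$. An unextendible product basis (UPB) is a set of mutually orthogonal fully product pure states spanning a proper subspace whose orthogonal complement contains no fully product state; it is unextendible across every bipartition if, for every bipartition, the orthogonal complement contains no pure state that is a product state with respect to that bipartition. An unextendible entangled basis (UEB) is a set of mutually orthogonal pure entangled states spanning a proper subspace; its unextendibility is conserved across every bipartition if, for every bipartition, the orthogonal complement of its span contains no pure state that is entangled with respect to that bipartition (equivalently, every pure state in the complement is fully separable). A pure state is genuinely multipartite entangled if it is not a product state with respect to any bipartition. *)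

From HB Require Import structures.
From mathcomp Require Import all_boot all_order all_algebra.
From mathcomp Require Import complex.
From mathcomp Require Import reals.
Set Implicit Arguments. Unset Strict Implicit. Unset Printing Implicit Defensive.
Import Order.TTheory GRing.Theory Num.Theory.
Local Open Scope ring_scope.
Local Open Scope complex_scope.

(* Computational basis of (C^2)^{\otimes N}: bit strings x : {ffun 'I_N -> bool}.
   A vector of (C^2)^{\otimes N} is its coordinate function on this basis. *)
Definition basis_idx (N : nat) := {ffun 'I_N -> bool}.
Definition vec (R : realType) (N : nat) := basis_idx N -> R[i].

Definition inner (R : realType) (N : nat) (u v : vec R N) : R[i] :=
  \sum_(x : basis_idx N) (u x)^* * v x.

Definition orthogonal (R : realType) (N : nat) (u v : vec R N) : Prop :=
  inner u v = 0.

(* A pure state is (represented by) a nonzero vector. *)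
Definition nonzero (R : realType) (N : nat) (v : vec R N) : Prop :=
  exists x, v x != 0.

Definition fully_product (R : realType) (N : nat) (v : vec R N) : Prop :=
  nonzero v /\
  exists a : 'I_N -> bool -> R[i], forall x : basis_idx N, v x = \prod_(i < N) a i (x i).

Definition bipartition (N : nat) (S : {set 'I_N}) : Prop :=
  S != set0 /\ S != [set: 'I_N].

Definition depends_only_on (R : realType) (N : nat) (A : {set 'I_N}) (f : vec R N) : Prop :=
  forall x y : basis_idx N, (forall i, i \in A -> x i = y i) -> f x = f y.

Definition product_wrt (R : realType) (N : nat) (S : {set 'I_N}) (v : vec R N) : Prop :=
  nonzero v /\
  exists a b : vec R N, depends_only_on S a /\ depends_only_on (~: S) b /\
    forall x, v x = a x * b x.

Definition entangled_wrt (R : realType) (N : nat) (S : {set 'I_N}) (v : vec R N) : Prop :=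
  nonzero v /\ ~ product_wrt S v.

Definition entangled (R : realType) (N : nat) (v : vec R N) : Prop :=
  nonzero v /\ ~ fully_product v.

Definition GME (R : realType) (N : nat) (v : vec R N) : Prop :=
  nonzero v /\ forall S, bipartition S -> ~ product_wrt S v.

Definition mutually_orthogonal (R : realType) (N m : nat) (u : 'I_m -> vec R N) : Prop :=
  forall k l, k != l -> orthogonal (u k) (u l).

Definition in_span (R : realType) (N m : nat) (u : 'I_m -> vec R N) (v : vec R N) : Prop :=
  exists c : 'I_m -> R[i], forall x, v x = \sum_(k < m) c k * u k x.

Definition spans_proper_subspace (R : realType) (N m : nat) (u : 'I_m -> vec R N) : Prop :=
  exists v : vec R N, ~ in_span u v.

Definition in_complement (R : realType) (N m : nat) (u : 'I_m -> vec R N) (w : vec R N) : Prop :=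
  forall k, orthogonal (u k) w.

Definition UPB (R : realType) (N m : nat) (u : 'I_m -> vec R N) : Prop :=
  [/\ forall k, fully_product (u k),
      mutually_orthogonal u,
      spans_proper_subspace u &
      forall w, in_complement u w -> ~ fully_product w].

Definition unextendible_every_bipartition (R : realType) (N m : nat) (u : 'I_m -> vec R N) : Prop :=
  forall S : {set 'I_N}, bipartition S ->
    forall w, in_complement u w -> ~ product_wrt S w.

Definition UEB (R : realType) (N m : nat) (u : 'I_m -> vec R N) : Prop :=
  [/\ forall k, entangled (u k),
      mutually_orthogonal u,
      spans_proper_subspace u &
      forall w, in_complement u w -> ~ entangled w].

Definition UEB_conserved_every_bipartition (R : realType) (N m : nat) (u : 'I_m -> vec R N) : Prop :=
  forall S : {set 'I_N}, bipartition S ->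
    forall w, in_complement u w -> ~ entangled_wrt S w.

(* Splitting off the first qubit turns the UPB into orthogonal product vectors
   [A k (x) B k] of [C^2 (x) C^M] with a nonzero vector [w] in their complement, and it
   suffices to find a product vector [al (x) be] there: it is a product state across
   [{0} | rest].  In [C^2] the vectors orthogonal to a nonzero [A l] form the line through
   [qperp (A l)]; hence the [B k] with [A k] orthogonal to [A l] are mutually orthogonal,
   and [B l] is orthogonal to every other [B k] whose [A k] is not orthogonal to [A l].
   Either some [B l] has a nonzero residual [beta l] against those [B k], and then
   [qperp (A l) (x) beta l] is orthogonal to all the states; or every [B l] lies in their
   span, and then every slice [w (b, _)] is orthogonal to all the [B k], so
   [|b> (x) w (b, _)] does the job.

   The states [|x> +- |flip x>] are genuinely entangled, because mixing [x]
   and [flip x] across a bipartition leaves their support.  Together with three states on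
   [|e1>, |flip e1>, |1...1>] they form an orthogonal basis of the complement of
   [|0...0>], which is fully product. *)

From Pilot Require Import Defs.
From mathcomp Require Import all_boot all_order all_algebra.
From mathcomp Require Import complex reals ring.
Set Implicit Arguments. Unset Strict Implicit. Unset Printing Implicit Defensive.
Import Order.TTheory GRing.Theory Num.Theory.
Local Open Scope ring_scope.

Section Dot.
Variables (R : realType) (I : finType).
Local Notation C := R[i].
Implicit Types (f g h : I -> C).

Definition dot f g : C := \sum_x (f x)^* * g x.

Lemma dotC f g : dot g f = (dot f g)^*.
Proof.
by rewrite /dot rmorph_sum; apply: eq_bigr => x _; rewrite rmorphM /= conjCK mulrC.
Qed.

Lemma eq_dotl f f' g : f =1 f' -> dot f g = dot f' g.
Proof. by move=> ff'; apply: eq_bigr => x _; rewrite ff'. Qed.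

Lemma eq_dotr f g g' : g =1 g' -> dot f g = dot f g'.
Proof. by move=> gg'; apply: eq_bigr => x _; rewrite gg'. Qed.

Lemma dot_self_eq0 f : (dot f f == 0) = [forall x, f x == 0].
Proof.
rewrite /dot psumr_eq0 => [|x _]; last by rewrite mulrC mul_conjC_ge0.
apply/allP/forallP => [f0 x|f0 x _]; last by rewrite mulf_eq0 f0 orbT.
by have := f0 x (mem_index_enum x); rewrite mulf_eq0 conjC_eq0 orbb.
Qed.

Lemma dot_self_neq0 f : (exists x, f x != 0) -> dot f f != 0.
Proof. by case=> x fx; rewrite dot_self_eq0; apply/forallPn; exists x. Qed.

Lemma dotZl mu f g : dot (fun x => mu * f x) g = mu^* * dot f g.
Proof. by rewrite /dot mulr_sumr; apply: eq_bigr => x _; rewrite rmorphM /= mulrA. Qed.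

Lemma dotZr mu f g : dot f (fun x => mu * g x) = mu * dot f g.
Proof. by rewrite /dot mulr_sumr; apply: eq_bigr => x _; rewrite mulrCA. Qed.

Lemma dotBr f g h : dot f (fun x => g x - h x) = dot f g - dot f h.
Proof. by rewrite /dot -sumrB; apply: eq_bigr => x _; rewrite mulrBr. Qed.

Lemma dot_sumr m (P : pred 'I_m) (c : 'I_m -> C) (F : 'I_m -> I -> C) f :
  dot f (fun x => \sum_(k | P k) c k * F k x) = \sum_(k | P k) c k * dot f (F k).
Proof.
rewrite /dot (eq_bigr (fun x => \sum_(k | P k) c k * ((f x)^* * F k x))).
  by rewrite exchange_big; apply: eq_bigr => k _; rewrite mulr_sumr.
by move=> x _; rewrite mulr_sumr; apply: eq_bigr => k _; rewrite mulrCA.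
Qed.

Lemma dot_suml m (P : pred 'I_m) (c : 'I_m -> C) (F : 'I_m -> I -> C) g :
  dot (fun x => \sum_(k | P k) c k * F k x) g = \sum_(k | P k) (c k)^* * dot (F k) g.
Proof. by rewrite dotC dot_sumr rmorph_sum; apply: eq_bigr => k _; rewrite rmorphM /= -dotC. Qed.

Definition residual m (P : pred 'I_m) (F : 'I_m -> I -> C) g : I -> C :=
  fun x => g x - \sum_(k | P k) (dot (F k) g / dot (F k) (F k)) * F k x.

Lemma dot_residual m (P : pred 'I_m) (F : 'I_m -> I -> C) g :
  {in P &, forall k l, k != l -> dot (F k) (F l) = 0} ->
  {in P, forall k, dot (F k) (residual P F g) = 0}.
Proof.
move=> orthF k Pk; rewrite dotBr dot_sumr (bigD1 k) //= big1 ?addr0 => [|l /andP[Pl lk]].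
  have [Fk0|/divfK->] := eqVneq (dot (F k) (F k)) 0; last by rewrite subrr.
  move: Fk0 => /eqP; rewrite dot_self_eq0 => /forallP Fk0.
  by rewrite /dot big1 ?mul0r ?subr0 // => x _; rewrite (eqP (Fk0 x)) rmorph0 mul0r.
by rewrite (orthF k l) ?mulr0 // eq_sym.
Qed.

End Dot.

Section Qubit.
Variable R : realType.
Local Notation C := R[i].
Implicit Types (p r v : bool -> C).

Lemma dot_bool p v : dot p v = (p true)^* * v true + (p false)^* * v false.
Proof. by rewrite /dot big_bool. Qed.

Definition qperp p : bool -> C := fun b => if b then (p false)^* else - (p true)^*.

Lemma dot_qperp p : dot p (qperp p) = 0.
Proof. by rewrite dot_bool /=; ring. Qed.

Lemma dot_qperp_self p : dot (qperp p) (qperp p) = dot p p.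
Proof. by rewrite !dot_bool /= rmorphN /= !conjCK; ring. Qed.

Lemma qubit_orth_eq0 p v : (exists b, p b != 0) ->
  dot p v = 0 -> dot (qperp p) v = 0 -> forall b, v b = 0.
Proof.
move=> /dot_self_neq0 pp pv qv.
have vtrue : dot p p * v true = p true * dot p v + (p false)^* * dot (qperp p) v.
  by rewrite !dot_bool /= rmorphN /= !conjCK; ring.
have vfalse : dot p p * v false = p false * dot p v - (p true)^* * dot (qperp p) v.
  by rewrite !dot_bool /= rmorphN /= !conjCK; ring.
rewrite pv qv !mulr0 ?addr0 ?subr0 in vtrue vfalse.
by case; apply/eqP; rewrite -(mulrI_eq0 _ (mulfI pp)) ?vtrue ?vfalse.
Qed.

Lemma qubit_orth_qperp p r : (exists b, p b != 0) -> dot p r = 0 ->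
  exists mu, r =1 (fun b => mu * qperp p b).
Proof.
move=> p_neq0 pr; set mu := dot (qperp p) r / dot p p; exists mu => b.
have res_eq0 := @qubit_orth_eq0 p (fun b => r b - mu * qperp p b) p_neq0.
apply/eqP; rewrite -subr_eq0; apply/eqP/res_eq0.
  by rewrite dotBr dotZr dot_qperp pr mulr0 subr0.
by rewrite dotBr dotZr dot_qperp_self divfK ?subrr ?dot_self_neq0.
Qed.

Lemma qperp_neq0 p : (exists b, p b != 0) -> exists b, qperp p b != 0.
Proof.
by move/dot_self_neq0; rewrite -dot_qperp_self dot_self_eq0 => /forallPn[b]; exists b.
Qed.

End Qubit.

Section Tensor.
Variables (R : realType) (I J : finType).
Local Notation C := R[i].

Definition tensor (f : I -> C) (g : J -> C) : I * J -> C := fun p => f p.1 * g p.2.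

Lemma dot_tensorl f g (w : I * J -> C) :
  dot (tensor f g) w = dot f (fun i => dot g (fun j => w (i, j))).
Proof.
rewrite /dot (eq_bigr (fun p => (f p.1)^* * ((g p.2)^* * w (p.1, p.2)))).
  rewrite -(pair_bigA _ (fun i j => (f i)^* * ((g j)^* * w (i, j)))).
  by apply: eq_bigr => i _; rewrite mulr_sumr.
by move=> [i j] _; rewrite rmorphM /= mulrA.
Qed.

Lemma dot_tensor f g f' g' : dot (tensor f g) (tensor f' g') = dot f f' * dot g g'.
Proof.
rewrite dot_tensorl mulrC -dotZr; apply: eq_dotr => i.
by rewrite /tensor /= dotZr mulrC.
Qed.

End Tensor.

Section QubitTensorComplement.
Variables (R : realType) (I : finType) (m : nat).
Local Notation C := R[i].
Variables (A : 'I_m -> bool -> C) (B : 'I_m -> I -> C).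
Hypothesis A_neq0 : forall k, exists b, A k b != 0.
Hypothesis AB_orth :
  forall k l, k != l -> dot (tensor (A k) (B k)) (tensor (A l) (B l)) = 0.

Lemma B_orth k l : k != l -> dot (A k) (A l) != 0 -> dot (B k) (B l) = 0.
Proof.
by move=> kl Akl; apply/eqP; rewrite -(mulrI_eq0 _ (mulfI Akl)) -dot_tensor AB_orth.
Qed.

Let perp l : pred 'I_m := fun k => dot (A l) (A k) == 0.
Let beta l := residual (perp l) B (B l).

Lemma A_perp l k : k \in perp l -> exists2 mu, mu != 0 & A k =1 (fun b => mu * qperp (A l) b).
Proof.
move=> /eqP Alk; have [mu Amu] := qubit_orth_qperp (A_neq0 l) Alk.
exists mu => //; apply: contraTneq isT => mu0.
by case: (A_neq0 k) => b; rewrite Amu mu0 mul0r eqxx.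
Qed.

Lemma B_perp_orth l : {in perp l &, forall k k', k != k' -> dot (B k) (B k') = 0}.
Proof.
move=> k k' /A_perp[mu mu0 Amu] /A_perp[mu' mu'0 Amu'] kk'; apply: B_orth => //.
rewrite (eq_dotl _ Amu) (eq_dotr _ Amu') dotZl dotZr dot_qperp_self.
by rewrite !mulf_neq0 ?conjC_eq0 ?dot_self_neq0.
Qed.

Lemma dot_B_beta l k : dot (A k) (qperp (A l)) != 0 -> dot (B k) (beta l) = 0.
Proof.
move=> Akq; have [kl|kNl] := boolP (k \in perp l).
  exact: dot_residual (B l) (@B_perp_orth l) _ kl.
have kNl' : k != l by apply: contraNneq Akq => ->; rewrite dot_qperp.
have Akl : dot (A k) (A l) != 0 by rewrite dotC conjC_eq0.
rewrite /beta /residual dotBr dot_sumr B_orth // sub0r big1 ?oppr0 // => k' k'l.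
have [mu mu0 Amu] := A_perp k'l.
rewrite (@B_orth k k') ?mulr0 //; first by apply: contraNneq kNl => ->.
by rewrite (eq_dotr _ Amu) dotZr mulf_neq0.
Qed.

Lemma dot_tensor_qperp_beta l k :
  dot (tensor (A k) (B k)) (tensor (qperp (A l)) (beta l)) = 0.
Proof.
rewrite dot_tensor; have [->|Akq] := eqVneq (dot (A k) (qperp (A l))) 0.
  by rewrite mul0r.
by rewrite dot_B_beta ?mulr0.
Qed.

Lemma beta_eq0_orth (w : bool * I -> C) : (forall l x, beta l x = 0) ->
  (forall k, dot (tensor (A k) (B k)) w = 0) ->
  forall k b, dot (B k) (fun x => w (b, x)) = 0.
Proof.
move=> beta0 wAB; pose V k b := dot (B k) (fun x => w (b, x)).
have AV k : dot (A k) (V k) = 0 by rewrite -dot_tensorl.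
move=> l; apply: (qubit_orth_eq0 (A_neq0 l) (AV l)).
pose c k := dot (B k) (B l) / dot (B k) (B k).
have Vl : V l =1 (fun b => \sum_(k | perp l k) (c k)^* * V k b).
  move=> b; rewrite /V -dot_suml; apply: eq_dotl => x.
  by apply/eqP; rewrite -subr_eq0; apply/eqP; exact: beta0.
rewrite (eq_dotr _ Vl) dot_sumr big1 // => k /A_perp[mu mu0 Amu].
move: (AV k); rewrite (eq_dotl _ Amu) dotZl => /eqP.
by rewrite mulf_eq0 conjC_eq0 (negbTE mu0) /= => /eqP->; rewrite mulr0.
Qed.

Lemma qubit_tensor_complement_product (w : bool * I -> C) :
  (exists p, w p != 0) -> (forall k, dot (tensor (A k) (B k)) w = 0) ->
  exists al be, [/\ exists b, al b != 0, exists x, be x != 0 &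
    forall k, dot (tensor (A k) (B k)) (tensor al be) = 0].
Proof.
move=> [[b x] wbx] wAB.
have [/existsP[l /existsP[y bly]] | /existsPn beta0] :=
  boolP [exists l, exists y, beta l y != 0].
  exists (qperp (A l)), (beta l); split; first exact: qperp_neq0.
    by exists y.
  exact: dot_tensor_qperp_beta.
have beta_eq0 l y : beta l y = 0.
  by apply/eqP; move/existsPn: (beta0 l) => /(_ y); rewrite negbK.
exists (fun c => (c == b)%:R), (fun y => w (b, y)); split.
- by exists b; rewrite eqxx oner_eq0.
- by exists x.
- by move=> k; rewrite dot_tensor beta_eq0_orth ?mulr0.
Qed.

End QubitTensorComplement.

Lemma complement_neq0 (R : realType) N m (u : 'I_m -> vec R N) :
  mutually_orthogonal u -> spans_proper_subspace u ->
  exists w, nonzero w /\ in_complement u w.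
Proof.
move=> u_orth [v vNspan]; exists (residual predT u v); split.
  have [/existsP[x wx]|/existsPn w0] := boolP [exists x, residual predT u v x != 0].
    by exists x.
  case: vNspan; exists (fun k => dot (u k) v / dot (u k) (u k)) => x.
  by apply/eqP; rewrite -subr_eq0 -[_ == 0]negbK (w0 x).
by move=> k; apply: (dot_residual v (fun k l _ _ => u_orth k l)).
Qed.

Section FirstQubit.
Variables (R : realType) (n : nat).
Local Notation C := R[i].

Definition qjoin (p : bool * basis_idx n) : basis_idx n.+1 :=
  [ffun i => if unlift ord0 i is Some j then p.2 j else p.1].

Definition qsplit (x : basis_idx n.+1) : bool * basis_idx n :=
  (x ord0, [ffun j => x (lift ord0 j)]).

Lemma qjoinK : cancel qjoin qsplit.
Proof.
move=> [b y]; rewrite /qsplit ffunE unlift_none; congr pair.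
by apply/ffunP => j; rewrite !ffunE liftK.
Qed.

Lemma qsplitK : cancel qsplit qjoin.
Proof. by move=> x; apply/ffunP => i; rewrite ffunE; case: unliftP => [j|] ->; rewrite ?ffunE. Qed.

Lemma inner_qjoin (f g : vec R n.+1) : inner f g = dot (f \o qjoin) (g \o qjoin).
Proof.
by rewrite /inner /dot (reindex qjoin) //; exists qsplit => p _; rewrite ?qjoinK ?qsplitK.
Qed.

Lemma fully_product_qjoin (v : vec R n.+1) : fully_product v ->
  exists (A : bool -> C) (B : vec R n), (exists b, A b != 0) /\ v \o qjoin =1 tensor A B.
Proof.
case=> -[x vx] [a va].
set B := fun y : basis_idx n => \prod_(j < n) a (lift ord0 j) (y j).
have vAB : v \o qjoin =1 tensor (a ord0) B.
  move=> [b y]; rewrite /= va big_ord_recl ffunE unlift_none.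
  by congr (_ * _); apply: eq_bigr => j _; rewrite ffunE liftK.
exists (a ord0), B; split=> //; exists (x ord0).
move: vx; rewrite -{1}(qsplitK x) -[v _]/((v \o qjoin) _) vAB.
by rewrite /tensor mulf_eq0 negb_or => /andP[].
Qed.

Lemma product_wrt_qsplit (al : bool -> C) (be : vec R n) :
  (exists b, al b != 0) -> (exists y, be y != 0) ->
  product_wrt [set ord0] (tensor al be \o qsplit).
Proof.
move=> [b alb] [y bey]; split; first by exists (qjoin (b, y)); rewrite /= qjoinK mulf_neq0.
exists (fun x => al (x ord0)), (fun x => be (qsplit x).2); split; [|split=> //].
  by move=> x x' xx'; rewrite xx' // inE.
move=> x x' xx'; congr be; apply/ffunP => j.
by rewrite !ffunE xx' // !inE eq_sym neq_lift.
Qed.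

End FirstQubit.

Lemma bipartition_first n : bipartition [set ord0 : 'I_n.+2].
Proof.
split; first by apply/set0Pn; exists ord0; rewrite inE.
by apply/eqP => /setP /(_ ord_max); rewrite !inE.
Qed.

Theorem UPB_not_unextendible_every_bipartition (R : realType) n m (u : 'I_m -> vec R n.+2) :
  UPB u -> ~ unextendible_every_bipartition u.
Proof.
case=> u_prod u_orth u_proper _ u_unext.
have [A /fin_all_exists[B /all_and2[A_neq0 uAB]]] :=
  fin_all_exists (fun k => fully_product_qjoin (u_prod k)).
have AB_orth k l : k != l -> dot (tensor (A k) (B k)) (tensor (A l) (B l)) = 0.
  by move=> kl; rewrite -(eq_dotl _ (uAB k)) -(eq_dotr _ (uAB l)) -inner_qjoin u_orth.
have [w [[x wx] w_orth]] := complement_neq0 u_orth u_proper.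
have [|k|al [be [al_neq0 be_neq0 al_be_orth]]] :=
  qubit_tensor_complement_product A_neq0 AB_orth (w := w \o qjoin (n := n.+1)).
- by exists (qsplit x); rewrite /= qsplitK.
- by rewrite -(eq_dotl _ (uAB k)) -inner_qjoin w_orth.
apply: (u_unext _ (bipartition_first n) _ _ (product_wrt_qsplit al_neq0 be_neq0)).
move=> k; rewrite /Defs.orthogonal inner_qjoin (eq_dotl _ (uAB k)) -(al_be_orth k).
by apply: eq_dotr => p; rewrite /= qjoinK.
Qed.

Section ProductStates.
Variables (R : realType) (N : nat).
Implicit Types (v w : vec R N) (S : {set 'I_N}).

Lemma fully_product_wrt S v : fully_product v -> product_wrt S v.
Proof.
case=> v_neq0 [a va]; split=> //.
exists (fun x => \prod_(i in S) a i (x i)), (fun x => \prod_(i in ~: S) a i (x i)).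
split; [|split].
- by move=> x y xy; apply: eq_bigr => i iS; rewrite xy.
- by move=> x y xy; apply: eq_bigr => i iS; rewrite xy.
- by move=> x; rewrite va (bigID (mem S)) /=; congr (_ * _); apply: eq_bigl => i; rewrite inE.
Qed.

Definition mix S (p q : basis_idx N) : basis_idx N := [ffun i => if i \in S then p i else q i].

(* [v (mix S p q)] factors as [a p * b q] when [v x = a x * b x] across [S]. *)
Lemma product_wrt_mix S v p q :
  product_wrt S v -> v p != 0 -> v q != 0 -> v (mix S p q) != 0.
Proof.
case=> _ [a [b [Sa [Sb vab]]]]; rewrite !vab !mulf_eq0 !negb_or.
move=> /andP[ap _] /andP[_ bq]; rewrite (Sa _ p) ?(Sb _ q) ?ap ?bq // => i.
  by rewrite inE ffunE => /negbTE->.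
by rewrite ffunE => ->.
Qed.

End ProductStates.

Lemma fully_product_supported (R : realType) n (z : basis_idx n.+1) (w : vec R n.+1) :
  (forall x, x != z -> w x = 0) -> nonzero w -> fully_product w.
Proof.
move=> w_supp w_neq0; split=> //.
have wz : w z != 0.
  by case: w_neq0 => x; have [->|/w_supp->] := eqVneq x z; rewrite ?eqxx.
exists (fun i b => (b == z i)%:R * (if i == ord0 then w z else 1)) => x.
rewrite big_split /= -big_mkcond big_pred1_eq.
have [->|xz] := eqVneq x z; first by rewrite big1 ?mul1r // => i _; rewrite eqxx.
have /existsP[i xiz] : [exists i, x i != z i].
  by apply: contraNT xz => /existsPn xz; apply/eqP/ffunP => i; apply/eqP/negPn.
by rewrite w_supp // (bigD1 i) //= (negbTE xiz) !mul0r.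
Qed.

Section GHZFamily.
Variables (R : realType) (n : nat).
Local Notation C := R[i].
Local Notation T := (basis_idx n.+2).
Implicit Types (p r x y z : T) (w : vec R n.+2).

Definition zeros : T := [ffun => false].
Definition ones : T := [ffun => true].
Definition flip x : T := [ffun i => ~~ x i].
Definition e1 : T := [ffun i => val i == 1%N].

(* For [x] outside [{0...0, 1...1, e1}], [ghz x = |x> + (-1)^(x_0) |flip x>].  The states
   [ghz e1], [ghz ones] and [ghz (flip e1)] have coordinates [(1, 1, 1)], [(1, 1, -2)] and
   [(-1, 1, 0)] on [|e1>, |flip e1>, |1...1>]. *)
Definition anchor x : T := if x == ones then e1 else x.
Definition flip_coef x : C := if anchor x ord0 then -1 else 1.
Definition ones_coef x : C := if x == ones then -2 else if x == e1 then 1 else 0.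
Definition ghz x : vec R n.+2 := fun z =>
  (z == anchor x)%:R + flip_coef x * (z == flip (anchor x))%:R + ones_coef x * (z == ones)%:R.

Lemma flipK : involutive flip.
Proof. by move=> x; apply/ffunP => i; rewrite !ffunE negbK. Qed.

Lemma flip_inj : injective flip. Proof. exact: inv_inj flipK. Qed.

Lemma eq_flip x y : (flip x == y) = (x == flip y).
Proof. by rewrite -(inj_eq flip_inj) flipK. Qed.

Lemma neq_bit0 x y : x ord0 != y ord0 -> x != y.
Proof. by apply: contraNneq => ->. Qed.

Lemma flip_neq x : flip x != x.
Proof. by apply: neq_bit0; rewrite ffunE; case: (x ord0). Qed.

Lemma flip_eq_ones x : (flip x == ones) = (x == zeros).
Proof.
by rewrite eq_flip; congr (_ == _); apply/ffunP => i; rewrite !ffunE.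
Qed.

Lemma e1_neq_ones : e1 != ones. Proof. by apply: neq_bit0; rewrite !ffunE. Qed.

Lemma e1_neq_zeros : e1 != zeros.
Proof. by apply/eqP => /ffunP /(_ (lift ord0 ord0)); rewrite !ffunE. Qed.

Lemma anchor_neq_ones x : anchor x != ones.
Proof. by rewrite /anchor; case: (x =P ones) => [_|/eqP //]; exact: e1_neq_ones. Qed.

Lemma anchor_neq_zeros x : x != zeros -> anchor x != zeros.
Proof. by rewrite /anchor; case: (x =P ones) => [_ _|]; first exact: e1_neq_zeros. Qed.

Lemma flip_anchor_neq_ones x : x != zeros -> flip (anchor x) != ones.
Proof. by rewrite flip_eq_ones; exact: anchor_neq_zeros. Qed.

Lemma anchor_id x : x != ones -> anchor x = x.
Proof. by rewrite /anchor => /negbTE->. Qed.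

Lemma ones_coef_eq0 x : x != ones -> x != e1 -> ones_coef x = 0.
Proof. by rewrite /ones_coef => /negbTE-> /negbTE->. Qed.

Lemma ones_coef_neq0 x : ones_coef x != 0 -> anchor x = e1.
Proof.
rewrite /ones_coef /anchor; case: (x =P ones) => // _.
by case: (x =P e1) => [->|_]; rewrite ?eqxx.
Qed.

Lemma conj_flip_coef x : (flip_coef x)^* = flip_coef x.
Proof. by rewrite /flip_coef; case: ifP; rewrite ?rmorphN /= rmorph1. Qed.

Lemma conj_ones_coef x : (ones_coef x)^* = ones_coef x.
Proof.
by rewrite /ones_coef; do 2?case: ifP => _; rewrite ?rmorphN /= ?rmorph1 ?rmorph0 ?rmorph_nat.
Qed.

Lemma flip_coefD_eq0 x x' : anchor x = flip (anchor x') -> flip_coef x + flip_coef x' = 0.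
Proof.
by rewrite /flip_coef => ->; rewrite ffunE; case: (anchor x' ord0); rewrite ?subrr ?addNr.
Qed.

Lemma ghz_neq_ones x z : z != ones ->
  ghz x z = (z == anchor x)%:R + flip_coef x * (z == flip (anchor x))%:R.
Proof. by rewrite /ghz => /negbTE->; rewrite mulr0 addr0. Qed.

Lemma ghz_ones x : x != zeros -> ghz x ones = ones_coef x.
Proof.
move=> x0; rewrite /ghz eqxx mulr1 eq_sym (negbTE (anchor_neq_ones x)).
by rewrite eq_sym (negbTE (flip_anchor_neq_ones x0)) mulr0 !add0r.
Qed.

Lemma ghz_anchor x : x != zeros -> ghz x (anchor x) = 1.
Proof.
move=> x0; rewrite ghz_neq_ones ?anchor_neq_ones // eqxx eq_sym.
by rewrite (negbTE (flip_neq _)) mulr0 addr0.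
Qed.

Lemma ghz_flip_anchor x : x != zeros -> ghz x (flip (anchor x)) = flip_coef x.
Proof.
move=> x0; rewrite ghz_neq_ones ?flip_anchor_neq_ones // eqxx mulr1.
by rewrite (negbTE (flip_neq _)) add0r.
Qed.

Lemma ghz_support x z : x != zeros -> ghz x z != 0 ->
  [\/ z = anchor x, z = flip (anchor x) | z = ones].
Proof.
rewrite /ghz => _; have [->|_] := eqVneq z (anchor x); first by constructor 1.
have [->|_] := eqVneq z (flip (anchor x)); first by constructor 2.
by have [->|_] := eqVneq z ones; [constructor 3 | rewrite !mulr0 !addr0 eqxx].
Qed.

Lemma sum_ket (g : vec R n.+2) z : \sum_y (y == z)%:R * g y = g z.
Proof.
by rewrite (bigD1 z) //= eqxx mul1r big1 ?addr0 // => y /negbTE->; rewrite mul0r.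
Qed.

Lemma dot_ghzl x g :
  dot (ghz x) g = g (anchor x) + flip_coef x * g (flip (anchor x)) + ones_coef x * g ones.
Proof.
rewrite /dot (eq_bigr (fun y => (y == anchor x)%:R * g y
  + flip_coef x * ((y == flip (anchor x))%:R * g y) + ones_coef x * ((y == ones)%:R * g y))).
  by rewrite !big_split /= -!mulr_sumr !sum_ket.
by move=> y _; rewrite /ghz !rmorphD !rmorphM /= conj_flip_coef conj_ones_coef !rmorph_nat; ring.
Qed.

Lemma dot_ghz x x' : x != zeros -> x' != zeros ->
  dot (ghz x) (ghz x') = (anchor x == anchor x')%:R * (1 + flip_coef x * flip_coef x')
    + (anchor x == flip (anchor x'))%:R * (flip_coef x + flip_coef x')
    + ones_coef x * ones_coef x'.
Proof.
move=> x0 x'0; rewrite dot_ghzl ghz_ones // !ghz_neq_ones ?anchor_neq_ones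
  ?flip_anchor_neq_ones // (inj_eq flip_inj) eq_flip; ring.
Qed.

Lemma ghz_orth x x' : x != zeros -> x' != zeros -> x != x' -> dot (ghz x) (ghz x') = 0.
Proof.
move=> x0 x'0 xx'; rewrite dot_ghz //.
have [aa'|aa'] := eqVneq (anchor x) (anchor x'); last first.
  have -> : ones_coef x * ones_coef x' = 0.
    apply: contraNeq aa'; rewrite mulf_eq0 negb_or.
    by case/andP=> /ones_coef_neq0-> /ones_coef_neq0->.
  rewrite mul0r add0r addr0.
  by have [/flip_coefD_eq0->|_] := eqVneq (anchor x) (flip (anchor x')); rewrite ?mulr0 ?mul0r.
have {x0 x'0 xx'} [[-> ->]|[-> ->]] : (x = ones /\ x' = e1) \/ (x = e1 /\ x' = ones).
  move: aa' xx'; rewrite /anchor.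
  case: (x =P ones) => [->|_]; case: (x' =P ones) => [->|_].
  - by rewrite eqxx.
  - by move=> <-; left.
  - by move=> ->; right.
  - by move=> -> /eqP.
all: rewrite /flip_coef /ones_coef /anchor (negbTE e1_neq_ones) !eqxx.
all: rewrite eq_sym (negbTE (flip_neq e1)).
all: by rewrite ffunE /=; ring.
Qed.

Lemma flip_zeros : flip zeros = ones.
Proof. by apply/ffunP => i; rewrite !ffunE. Qed.

Lemma ones_neq_zeros : ones != zeros.
Proof. by apply: neq_bit0; rewrite !ffunE. Qed.

Lemma ghz_zeros x : x != zeros -> ghz x zeros = 0.
Proof.
move=> x0; rewrite ghz_neq_ones 1?eq_sym ?ones_neq_zeros // (negbTE (anchor_neq_zeros x0)).
by rewrite eq_sym eq_flip flip_zeros (negbTE (anchor_neq_ones x)) mulr0 addr0.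
Qed.

Lemma add_sub_eq0 (a b : C) : a + b = 0 -> b - a = 0 -> a = 0 /\ b = 0.
Proof.
move=> ab ba; have a0 : a = 0.
  have /eqP : (a + b) - (b - a) = 0 by rewrite ab ba subrr.
  by rewrite (_ : _ - _ = 2 * a) ?mulf_eq0 ?pnatr_eq0 => [/eqP|]; last ring.
by split=> //; move: ab; rewrite a0 add0r.
Qed.

Section Complement.
Variable w : vec R n.+2.
Hypothesis w_orth : forall x, x != zeros -> dot (ghz x) w = 0.

Lemma ghz_complement_pair r : r ord0 = false -> r != zeros -> r != e1 ->
  w r = 0 /\ w (flip r) = 0.
Proof.
move=> r0 rz re; have fr0 : flip r ord0 = true by rewrite ffunE r0.
have r1 : r != ones by apply: neq_bit0; rewrite r0 ffunE.
have fr1 : flip r != ones by rewrite flip_eq_ones.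
have fre : flip r != e1 by apply: neq_bit0; rewrite fr0 ffunE.
have frz : flip r != zeros by apply: neq_bit0; rewrite fr0 ffunE.
apply: add_sub_eq0.
  have := w_orth rz; rewrite dot_ghzl /flip_coef ones_coef_eq0 ?anchor_id //.
  by rewrite r0 mul1r mul0r addr0.
have := w_orth frz; rewrite dot_ghzl /flip_coef ones_coef_eq0 ?anchor_id // fr0 flipK.
by rewrite mul0r addr0 mulN1r.
Qed.

Lemma ghz_complement_e1 : [/\ w e1 = 0, w (flip e1) = 0 & w ones = 0].
Proof.
have e10 : e1 ord0 = false by rewrite ffunE.
have fe1z : flip e1 != zeros by apply: neq_bit0; rewrite !ffunE.
have fe1o : flip e1 != ones by rewrite flip_eq_ones e1_neq_zeros.
have := w_orth e1_neq_zeros; rewrite dot_ghzl /flip_coef /ones_coef anchor_id ?e1_neq_ones //.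
rewrite e10 (negbTE e1_neq_ones) eqxx !mul1r => Ee1.
have := w_orth fe1z; rewrite dot_ghzl /flip_coef anchor_id // ones_coef_eq0 ?flip_neq //.
  rewrite ffunE e10 flipK mulN1r mul0r addr0 => Efe1.
have := w_orth ones_neq_zeros.
rewrite dot_ghzl /flip_coef /ones_coef /anchor eqxx e10 mul1r => Eones.
have w1 : w ones = 0.
  have /eqP : (w e1 + w (flip e1) + w ones) - (w e1 + w (flip e1) + -2 * w ones) = 0.
    by rewrite Ee1 Eones subrr.
  by rewrite (_ : _ - _ = 3 * w ones) ?mulf_eq0 ?pnatr_eq0 => [/eqP|]; last ring.
by rewrite w1 addr0 in Ee1; case: (add_sub_eq0 Ee1 Efe1).
Qed.

Lemma ghz_complement z : z != zeros -> w z = 0.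
Proof.
move=> z0; have [we1 wfe1 wones] := ghz_complement_e1.
have [->|z1] := eqVneq z ones; first by [].
have [->|ze] := eqVneq z e1; first by [].
have [->|zfe] := eqVneq z (flip e1); first by [].
case z_0: (z ord0); last by case: (ghz_complement_pair z_0 z0 ze).
rewrite -(flipK z); apply: (proj2 (ghz_complement_pair (r := flip z) _ _ _)).
- by rewrite ffunE z_0.
- by rewrite eq_flip flip_zeros.
- by rewrite eq_flip.
Qed.

End Complement.

Lemma mix_flip_neq (S : {set 'I_n.+2}) p : bipartition S ->
  mix S p (flip p) != p /\ mix S p (flip p) != flip p.
Proof.
case=> /set0Pn[i iS]; rewrite eqEsubset subsetT /= => /subsetPn[j _ jNS].
split; apply/eqP; [move/ffunP/(_ j) | move/ffunP/(_ i)].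
  by rewrite /mix !ffunE (negbTE jNS); case: (p j).
by rewrite /mix !ffunE iS; case: (p i).
Qed.

Lemma flip_mix (S : {set 'I_n.+2}) p : flip (mix S p (flip p)) = mix S (flip p) p.
Proof. by apply/ffunP => i; rewrite !ffunE; case: (i \in S); rewrite ?ffunE ?negbK. Qed.

Lemma ghz_GME x : x != zeros -> GME (ghz x).
Proof.
move=> x0; split; first by exists (anchor x); rewrite ghz_anchor ?oner_eq0.
move=> S bipS prodS.
have ghz_a : ghz x (anchor x) != 0 by rewrite ghz_anchor ?oner_eq0.
have ghz_fa : ghz x (flip (anchor x)) != 0.
  by rewrite ghz_flip_anchor // /flip_coef; case: ifP; rewrite ?oppr_eq0 oner_eq0.
have supp z : ghz x z != 0 -> z != anchor x -> z != flip (anchor x) -> z = ones.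
  by case/(ghz_support x0) => ->; rewrite ?eqxx.
have [m_a m_fa] := mix_flip_neq (anchor x) bipS.
have [m_fa' m_a'] := mix_flip_neq (flip (anchor x)) bipS.
rewrite flipK -flip_mix in m_fa' m_a'.
have m1 := supp _ (product_wrt_mix prodS ghz_a ghz_fa) m_a m_fa.
have := supp _ (product_wrt_mix prodS ghz_fa ghz_a); rewrite -flip_mix.
by move=> /(_ m_a' m_fa'); rewrite m1; apply/eqP/flip_neq.
Qed.

End GHZFamily.

Arguments zeros {n}.

Lemma GME_entangled (R : realType) n (v : vec R n.+2) : GME v -> entangled v.
Proof.
case=> v_neq0 v_GME; split=> // /(fully_product_wrt [set ord0]).
exact: v_GME (bipartition_first n).
Qed.

Theorem exists_GME_UEB_conserved (R : realType) n : exists m (u : 'I_m -> vec R n.+2),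
  [/\ UEB u, forall k, GME (u k) & UEB_conserved_every_bipartition u].
Proof.
pose K := {x : basis_idx n.+2 | x != zeros}.
pose u (k : 'I_#|{: K}|) := ghz R (val (enum_val k)).
have u_neq0 (k : 'I_#|{: K}|) : val (enum_val k : K) != zeros.
  by case: (enum_val k).
have u_GME k : GME (u k) := ghz_GME R (u_neq0 k).
have complement_fully w : in_complement u w -> nonzero w -> fully_product w.
  move=> wu; apply: (fully_product_supported (z := zeros)); apply: ghz_complement => x x0.
  by have := wu (enum_rank (exist _ x x0)); rewrite /u enum_rankK.
exists #|{: K}|, u; split=> //; last first.
  by move=> S _ w wu [w_neq0 []]; apply/fully_product_wrt/complement_fully.
split.
- by move=> k; apply: GME_entangled.
- move=> k l kl; apply: ghz_orth => //.
  by apply: contra kl => /eqP/val_inj/enum_val_inj->.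
- exists (fun z => (z == zeros)%:R) => -[c /(_ zeros)].
  rewrite eqxx big1 => [/eqP|k _]; first by rewrite oner_eq0.
  by rewrite /u ghz_zeros ?mulr0.
- by move=> w wu [w_neq0 []]; apply: complement_fully.
Qed.

Theorem proposition4 (R : realType) :
  (forall N : nat, (2 <= N)%N ->
     ~ exists (m : nat) (u : 'I_m -> vec R N),
         UPB u /\ unextendible_every_bipartition u) /\
  (forall N : nat, (3 <= N)%N ->
     exists (m : nat) (u : 'I_m -> vec R N),
       [/\ UEB u, forall k, GME (u k) & UEB_conserved_every_bipartition u]).
Proof.
split=> [[|[|n]] // _ [m [u [uUPB]]] | [|[|[|n]]] // _].
  exact: UPB_not_unextendible_every_bipartition uUPB.
exact: exists_GME_UEB_conserved.
Qed.
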